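(* Let the setting be as in the context ($A=\mathcal O_{Y,y}$ a discrete valuation ring with $M$-grading, generators $e_m$ of $A_m$ with $e_0=1$, $N=\{n\in M: e_n\in A^\times\}$). If $N=\{0\}$, there exists $d\in M$ such that (i) $d$ generates $M$ as an abelian group, $e_d$ is a uniformizer of $A$, and $e_d$ generates $A$ as an $A_0$-algebra; and (ii) the $A$-linear map $\varphi:A^{\oplus(M\setminus\{0\})}\to\sigma_*\mathfrak m_{\mathrm{St}_{G,y}}$ sending the basis vector indexed by $m$ to the class of $X^m-1$ is surjective with kernel $(e_dA)^{\oplus(M\setminus\{0\})}$.
   Context: Standing assumptions: $S$ is a scheme of characteristic $p>0$, $X$ an $S$-scheme, $M$ a finite abelian $p$-group, $G=\mathrm D(M)=\mathrm{Spec}\,\mathcal O_S[M]$ (basis $X^m$ of the group algebra), and $(f:Y\to X,G)$ a $G$-covering of $X$ (a covering whose groupoid is the action groupoid $G\times_SY\rightrightarrows Y$: finite locally free, generically free, $f$ finite surjective locally free $G$-invariant of rank $|G|$, orbits in open affines) with $Y$ normal and locally noetherian. A $\mathrm D(M)$-action on an affine scheme $\mathrm{Spec}(A)$ corresponds to an $M$-grading $A=\bigoplus_m A_m$ with coaction $\sum a_m\mapsto\sum a_m\otimes X^m$. For a codimension $1$ point $y\in Y$, $A=\mathcal O_{Y,y}$ is a DVR carrying the induced $M$-grading $A=\bigoplus_mA_m$, each $A_m$ free of rank $1$ over $A_0$ with generator $e_m$ ($e_0=1$), and $e_me_n=\alpha_{m,n}e_{m+n}$. The stabilizer $\mathrm{St}_{G,y}=\mathrm{St}_G\times_Y\mathrm{Spec}(A)$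 of the action groupoid (fibre product of $(\mathrm{pr}_2,\text{action}):G\times Y\to Y\times_XY$ with the diagonal) has coordinate ring $A[M]/(e_m(X^m-1):m\in M)$, with structure map $\sigma$ and augmentation ideal $\mathfrak m_{\mathrm{St}_{G,y}}$ generated by the classes of $X^m-1$, $m\neq0$. The covering is called totally ramified at $y$ if $N=\{0\}$. *)

From HB Require Import structures.
From mathcomp Require Import all_boot all_order all_algebra.
Set Implicit Arguments. Unset Strict Implicit. Unset Printing Implicit Defensive.
Import Order.TTheory GRing.Theory Num.Theory.
Local Open Scope ring_scope.

Section Defs.
Variable A : comUnitRingType.

Definition is_ideal (I : pred A) : Prop :=
  [/\ 0 \in I, (forall x y, x \in I -> y \in I -> x + y \in I)
    & (forall a x, x \in I -> a * x \in I)].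

Definition is_principal (I : pred A) : Prop :=
  exists g : A, forall x, x \in I <-> exists a, x = a * g.

Definition is_local : Prop :=
  is_ideal [pred x : A | x \isn't a GRing.unit].

Definition is_DVR : Prop :=
  [/\ is_local,
      (forall I : pred A, is_ideal I -> is_principal I)
    & exists x : A, x != 0 /\ x \isn't a GRing.unit].

Definition uniformizer (x : A) : Prop :=
  forall y : A, y \isn't a GRing.unit <-> exists a, y = a * x.

Variable M : finZmodType.

(** An M-grading A = (+)_m A_m with A_m = A0 e_m free of rank one over the
    subring A0 = A_0, with e_0 = 1 and e_m e_n = alpha_{m,n} e_{m+n}. *)
Definition MGrading (A0 : pred A) (e : M -> A) : Prop :=
  [/\ 1 \in A0,
      (forall x y, x \in A0 -> y \in A0 -> x - y \in A0)
    & (forall x y, x \in A0 -> y \in A0 -> x * y \in A0)] /\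
  [/\ e 0 = 1,
      (forall m n, exists2 alpha, alpha \in A0 & e m * e n = alpha * e (m + n)),
      (forall a : A, exists2 f : M -> A, (forall m, f m \in A0) &
                                         a = \sum_m f m * e m)
    & (forall f g : M -> A, (forall m, f m \in A0) -> (forall m, g m \in A0) ->
         \sum_m f m * e m = \sum_m g m * e m -> forall m, f m = g m)].

(** The group algebra A[M], elements are finitely supported functions M -> A,
    the monomial X^m being the indicator of m. *)
Definition galg := {ffun M -> A}.
Definition gmul (f g : galg) : galg := [ffun k => \sum_m f m * g (k - m)].
Definition gX (m : M) : galg := [ffun k => (k == m)%:R].
Definition gC (a : A) : galg := [ffun k => (k == 0)%:R * a].

Definition in_gideal (I : finType) (gens : I -> galg) (f : galg) : Prop :=
  exists coef : I -> galg, f = \sum_i gmul (coef i) (gens i).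

(** Generators of the ideal defining the stabilizer: e_m (X^m - 1). *)
Definition stab_rel (e : M -> A) (m : M) : galg := gmul (gC (e m)) (gX m - gX 0).
Definition aug (m : M) : galg := gX m - gX 0.

(** The A-linear map phi : A^(M \ {0}) -> A[M] (to be read modulo the
    stabilizer ideal), sending the basis vector m to X^m - 1. *)
Definition phi (c : {m : M | m != 0} -> A) : galg :=
  \sum_(i : {m : M | m != 0}) gmul (gC (c i)) (aug (val i)).

Definition generates_algebra (A0 : pred A) (x : A) : Prop :=
  forall a : A, exists s : seq A, all (mem A0) s /\
    a = \sum_(i < size s) s`_i * x ^+ i.

End Defs.

From HB Require Import structures.
From mathcomp Require Import all_boot all_order all_algebra all_fingroup.
From mathcomp Require Import zify.
From mathcomp.algebra_tactics Require Import ring.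
From Stdlib Require Import Classical ClassicalEpsilon.
Import GRing.Theory.
Local Open Scope ring_scope.

Set Implicit Arguments. Unset Strict Implicit. Unset Printing Implicit Defensive.

(* Let v be the valuation of A and E > 0 the least valuation of a nonunit of A0.
   Comparing homogeneous decompositions shows that E divides the valuation of
   every element of A0 and that v (e m) < E, so m |-> v (e m) mod E is a group
   morphism M -> Z/E, injective because only e 0 is a unit.  Some homogeneous
   component of a uniformizer has valuation 1, and it cannot have degree 0 as M
   is nontrivial; hence v (e d) = 1 for some d, so that m = d *+ v (e m), e d is
   a uniformizer and e m is e d ^+ v (e m) up to a unit of A0.  On the
   stabilizer side, every element of the augmentation ideal is a combination of
   the X^m - 1, every coefficient of the stabilizer ideal is divisible by e d,
   and e d (X^(k d) - 1) is a multiple of e d (X^d - 1). *)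

Definition asbool (P : Prop) : bool :=
  if excluded_middle_informative P then true else false.

Lemma asboolP (P : Prop) : reflect P (asbool P).
Proof. by rewrite /asbool; case: excluded_middle_informative => H; constructor. Qed.

Lemma sumr_pred1_mull (R : nzSemiRingType) (I : finType) (a : I) (F : I -> R) :
  \sum_i (i == a)%:R * F i = F a.
Proof.
by rewrite (bigD1 a) //= eqxx mul1r big1 ?addr0 // => i /negPf ->; rewrite mul0r.
Qed.

Lemma sumr_pred1 (R : nzSemiRingType) (I : finType) (a : I) :
  \sum_i (i == a)%:R = 1 :> R.
Proof. by rewrite (bigD1 a) //= eqxx big1 ?addr0 // => i /negPf ->. Qed.

Lemma sum_powers_regroup (R : nzSemiRingType) (S : addrClosed R) (I : finType)
    (x : R) (c : I -> R) (k : I -> nat) (N : nat) :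
  (forall i, c i \in S) -> (forall i, (k i < N)%N) ->
  exists s : seq R, all (mem S) s /\
    \sum_i c i * x ^+ k i = \sum_(j < size s) s`_j * x ^+ j.
Proof.
move=> Sc k_lt; exists (mkseq (fun j => \sum_(i | k i == j) c i) N); split.
  by apply/allP => _ /mapP[j _ ->]; apply: rpred_sum.
rewrite size_mkseq (eq_bigr (fun j : 'I_N => \sum_i (k i == j)%:R * (c i * x ^+ k i))).
  rewrite exchange_big; apply: eq_bigr => i _.
  rewrite (bigD1 (Ordinal (k_lt i))) //= eqxx mul1r big1 ?addr0 // => j.
  by rewrite -val_eqE eq_sym => /negPf->; rewrite mul0r.
move=> j _; rewrite nth_mkseq // mulr_suml big_mkcond; apply: eq_bigr => i _.
by case: eqP => [->|_]; rewrite ?mul1r ?mul0r.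
Qed.

Lemma DVR_uniformizer (A : comUnitRingType) : is_DVR A ->
  exists pi : A, uniformizer pi /\ pi != 0.
Proof.
case=> loc A_pid [x [x_neq0 x_nonunit]]; have [pi pi_unif] := A_pid _ loc.
exists pi; split=> [y|]; first by rewrite -pi_unif.
apply: contraNneq x_neq0 => pi0.
by have [a ->] := (pi_unif x).1 x_nonunit; rewrite pi0 mulr0.
Qed.

Section DVRValuation.
Variables (A : idomainType) (pi : A).
Hypothesis pi_unif : uniformizer pi.
Hypothesis A_pid : forall I : pred A, is_ideal I -> is_principal I.
Hypothesis pi_neq0 : pi != 0.

Lemma uniformizer_nonunit : pi \isn't a GRing.unit.
Proof. by apply/pi_unif; exists 1; rewrite mul1r. Qed.

Lemma nonunitD (x y : A) :
  x \isn't a GRing.unit -> y \isn't a GRing.unit -> x + y \isn't a GRing.unit.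
Proof.
by move=> /pi_unif[a ->] /pi_unif[b ->]; apply/pi_unif; exists (a + b); rewrite mulrDl.
Qed.

(* The ideal of all z with z pi^n in A x for some n is principal, say A g.  If x
   were divisible by every power of pi, then g pi^N = b x and x = c g pi^(N+1)
   would give x = c b pi x, so pi would be a unit. *)
Lemma dvr_factor x : x != 0 ->
  exists n u, u \is a GRing.unit /\ x = u * pi ^+ n.
Proof.
move=> x_neq0; apply: NNPP => no_factor.
have pi_dvd_x n : exists y, x = y * pi ^+ n.
  elim: n => [|n [y def_x]]; first by exists x; rewrite mulr1.
  have : y \isn't a GRing.unit by apply/negP => y_unit; apply: no_factor; exists n, y.
  by case/pi_unif => a def_y; exists a; rewrite def_x def_y -mulrA -exprS.
pose J := [pred z : A | asbool (exists n b, z * pi ^+ n = b * x)].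
have J_ideal : is_ideal J.
  split; rewrite ?inE.
  - by apply/asboolP; exists 0%N, 0; rewrite !mul0r.
  - move=> y z; rewrite !inE => /asboolP[n1 [b1 E1]] /asboolP[n2 [b2 E2]].
    apply/asboolP; exists (n1 + n2)%N, (b1 * pi ^+ n2 + b2 * pi ^+ n1).
    have -> : (y + z) * pi ^+ (n1 + n2) = y * pi ^+ n1 * pi ^+ n2 + z * pi ^+ n2 * pi ^+ n1.
      by rewrite exprD; ring.
    by rewrite E1 E2; ring.
  - move=> a z; rewrite !inE => /asboolP[n [b Eb]].
    by apply/asboolP; exists n, (a * b); rewrite -mulrA Eb mulrA.
have [g J_gen] := A_pid J_ideal.
have /asboolP[N [b Eg]] : g \in J by apply/J_gen; exists 1; rewrite mul1r.
have [y def_x] := pi_dvd_x N.+1.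
have [c def_y] : exists c, y = c * g.
  by apply/J_gen; rewrite inE; apply/asboolP; exists N.+1, 1; rewrite mul1r.
have : x * (1 - c * b * pi) = 0.
  have Ex : x = c * (g * pi ^+ N) * pi by rewrite {1}def_x def_y exprSr; ring.
  by rewrite Eg in Ex; rewrite mulrBr mulr1 {1}Ex; ring.
move/eqP; rewrite mulf_eq0 (negPf x_neq0) /= subr_eq0 => /eqP cb_pi.
by move/negP: uniformizer_nonunit; apply; apply/unitrPr; exists (c * b); rewrite mulrC cb_pi.
Qed.

Lemma dvr_factor_ex x :
  exists n, x != 0 -> exists2 u, u \is a GRing.unit & x = u * pi ^+ n.
Proof.
have [->|/dvr_factor[n [u [u_unit def_x]]]] := eqVneq x 0; first by exists 0%N.
by exists n => _; exists u.
Qed.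

(* The valuation of 0 is an unspecified natural number. *)
Definition dvr_val x : nat :=
  proj1_sig (constructive_indefinite_description _ (dvr_factor_ex x)).
Local Notation v := dvr_val.

Lemma dvr_valP x : x != 0 -> exists2 u, u \is a GRing.unit & x = u * pi ^+ v x.
Proof. by rewrite /v; case: constructive_indefinite_description. Qed.

Lemma dvr_val_unique u u' n n' : u \is a GRing.unit -> u' \is a GRing.unit ->
  u * pi ^+ n = u' * pi ^+ n' -> n = n'.
Proof.
wlog le_nn' : u u' n n' / (n <= n')%N.
  move=> wlog_le u_unit u'_unit E.
  have [le_nn'|/ltnW le_n'n] := leqP n n'; first exact: (wlog_le u u').
  by symmetry; apply: (wlog_le u' u).
move=> u_unit u'_unit.
rewrite -(subnK le_nn') exprD mulrA => /(mulIf (expf_neq0 _ pi_neq0)) def_u.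
apply/eqP; rewrite -{1}(add0n n) eqn_add2r eq_sym -leqn0 leqNgt; apply/negP => gt0.
by move: u_unit; rewrite def_u unitrM unitrX_pos // (negPf uniformizer_nonunit) andbF.
Qed.

Lemma dvr_valE x u n : u \is a GRing.unit -> x = u * pi ^+ n -> v x = n.
Proof.
move=> u_unit def_x; have x_neq0 : x != 0.
  by rewrite def_x mulf_neq0 ?expf_neq0 //; apply: contraTneq u_unit => ->; rewrite unitr0.
have [u' u'_unit def_x'] := dvr_valP x_neq0.
by apply: (dvr_val_unique u'_unit u_unit); rewrite -def_x' -def_x.
Qed.

Lemma dvr_valM x y : x != 0 -> y != 0 -> v (x * y) = (v x + v y)%N.
Proof.
move=> /dvr_valP[u u_unit def_x] /dvr_valP[u' u'_unit def_y].
apply: (@dvr_valE _ (u * u')); first by rewrite unitrM u_unit.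
by rewrite {1}def_x {1}def_y exprD; ring.
Qed.

Lemma dvr_val_eq0 x : x != 0 -> (v x == 0%N) = (x \is a GRing.unit).
Proof.
move=> /dvr_valP[u u_unit def_x]; apply/eqP/idP => [v0|x_unit].
  by rewrite def_x v0 mulr1.
by apply: (dvr_valE x_unit); rewrite mulr1.
Qed.

Lemma dvr_val_gt0 x : x != 0 -> x \isn't a GRing.unit -> (0 < v x)%N.
Proof. by move=> x_neq0; rewrite lt0n dvr_val_eq0. Qed.

Lemma dvr_val_pi : v pi = 1%N.
Proof. by apply: (dvr_valE (unitr1 _)); rewrite mul1r. Qed.

Lemma dvr_valX x k : x != 0 -> v (x ^+ k) = (k * v x)%N.
Proof.
move=> x_neq0; elim: k => [|k IHk]; first by apply: (dvr_valE (unitr1 _)); rewrite mulr1.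
by rewrite exprS dvr_valM ?expf_neq0 // IHk mulSn.
Qed.

Lemma dvr_val_dvd x y : x != 0 -> y != 0 -> (v x <= v y)%N -> exists z, y = z * x.
Proof.
move=> /dvr_valP[u u_unit def_x] /dvr_valP[u' u'_unit def_y].
move: def_x def_y; set a := v x; set b := v y => -> -> /subnK def_b.
exists (u' / u * pi ^+ (b - a)).
by rewrite -[in LHS]def_b exprD -[u' in LHS](mulr1 u') -(mulVr u_unit); ring.
Qed.

Section Grading.
Variables (M : finZmodType) (A0 : pred A) (e : M -> A).
Hypothesis A0_subring : subring_closed A0.
HB.instance Definition _ := GRing.isSubringClosed.Build A A0 A0_subring.
Hypothesis e0 : e 0 = 1.
Hypothesis e_mul :
  forall m n, exists2 alpha, alpha \in A0 & e m * e n = alpha * e (m + n).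
Hypothesis e_decomp :
  forall a, exists2 f : M -> A, (forall m, f m \in A0) & a = \sum_m f m * e m.
Hypothesis e_decomp_uniq :
  forall f g : M -> A, (forall m, f m \in A0) -> (forall m, g m \in A0) ->
  \sum_m f m * e m = \sum_m g m * e m -> forall m, f m = g m.

Lemma e_neq0 m : e m != 0.
Proof.
apply/eqP => em0.
have E : \sum_k (k == m)%:R * e k = \sum_k (fun=> 0) k * e k.
  by rewrite sumr_pred1_mull em0 big1 // => k _; rewrite mul0r.
have := e_decomp_uniq (fun k => rpred_nat _ _) (fun=> rpred0 _) E m.
by rewrite eqxx => /eqP; rewrite oner_eq0.
Qed.

Lemma homogeneous_cofactor c a y m : c \in A0 -> c != 0 -> a \in A0 ->
  c * y = a * e m -> exists2 b, b \in A0 & y = b * e m /\ c * b = a.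
Proof.
move=> A0c c_neq0 A0a cy; have [f A0f def_y] := e_decomp y.
have E : \sum_k (c * f k) * e k = \sum_k ((k == m)%:R * a) * e k.
  transitivity (c * y).
    by rewrite def_y mulr_sumr; apply: eq_bigr => k _; rewrite mulrA.
  rewrite cy -(sumr_pred1_mull m (fun k => a * e k)).
  by apply: eq_bigr => k _; rewrite mulrA.
have f_homog := e_decomp_uniq (fun j => rpredM A0c (A0f j))
  (fun j => rpredM (rpred_nat _ _) A0a) E.
exists (f m) => //; split; last by rewrite f_homog eqxx mul1r.
rewrite def_y (bigD1 m) //= big1 ?addr0 // => k /negPf km.
move: (f_homog k); rewrite km mul0r => /eqP.
by rewrite mulf_eq0 (negPf c_neq0) => /eqP->; rewrite mul0r.
Qed.

Lemma eX_homogeneous m k : exists2 alpha, alpha \in A0 & e m ^+ k = alpha * e (m *+ k).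
Proof.
elim: k => [|k [alpha A0alpha def_emk]]; first by exists 1; rewrite ?rpred1 ?e0 ?mulr1.
have [beta A0beta def_e] := e_mul (m *+ k) m.
exists (alpha * beta); first exact: rpredM.
by rewrite exprSr def_emk -mulrA def_e mulrA mulrSr.
Qed.

Hypothesis e_unit_eq0 : forall n, e n \is a GRing.unit -> n = 0.
Hypothesis M_nontriv : (1 < #|M|)%N.

Lemma e_nonunit m : m != 0 -> e m \isn't a GRing.unit.
Proof. by apply: contraNN => /e_unit_eq0->. Qed.

Lemma exists_neq0 : exists m : M, m != 0.
Proof.
have /card_gt1P[x [y [_ _ xy]]] := M_nontriv.
by case: (eqVneq x 0) => [x0|]; [exists y; rewrite -x0 eq_sym | exists x].
Qed.

Lemma exists_A0_nonunit : exists x, [/\ x \in A0, x != 0 & x \isn't a GRing.unit].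
Proof.
have [m m_neq0] := exists_neq0.
have [alpha A0alpha def_emk] := eX_homogeneous m #[m]%g.
have emk1 : e (m *+ #[m]%g) = 1 by rewrite -FinRing.zmodXgE expg_order e0.
rewrite emk1 mulr1 in def_emk.
exists alpha; split=> //; rewrite -def_emk ?expf_neq0 ?e_neq0 //.
by rewrite unitrX_pos ?order_gt0 ?e_nonunit.
Qed.

Lemma exists_A0_min_val : exists t, [/\ t \in A0, t != 0, t \isn't a GRing.unit &
  forall x, x \in A0 -> x != 0 -> x \isn't a GRing.unit -> (v t <= v x)%N].
Proof.
pose P n := asbool (exists x, [/\ x \in A0, x != 0, x \isn't a GRing.unit & v x = n]).
have P_ex : exists n, P n.
  by have [x [A0x x_neq0 x_nonunit]] := exists_A0_nonunit; exists (v x); apply/asboolP; exists x.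
case: (ex_minnP P_ex) => n /asboolP[t [A0t t_neq0 t_nonunit <-]] t_min.
exists t; split=> // x A0x x_neq0 x_nonunit.
by apply: t_min; apply/asboolP; exists x.
Qed.

(* Otherwise every component of pi is a nonunit (the degree 0 one as pi minus
   the others) of valuation at least 2, so pi ^+ 2 would divide pi. *)
Lemma uniformizer_component_val1 :
  exists m a, [/\ a \in A0, a * e m != 0 & v (a * e m) = 1%N].
Proof.
have [f A0f def_pi] := e_decomp pi; apply: NNPP => no_val1.
have f_nonunit m : f m * e m \isn't a GRing.unit.
  have [->|m_neq0] := eqVneq m 0; last by rewrite unitrM negb_and e_nonunit ?orbT.
  have -> : f 0 * e 0 = pi - \sum_(k | k != 0) f k * e k.
    by rewrite def_pi (bigD1 0) //= addrK.
  rewrite -mulN1r; apply: nonunitD; first exact: uniformizer_nonunit.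
  rewrite unitrM negb_and; apply/orP; right.
  apply: (big_ind (fun z => z \isn't a GRing.unit)).
  - by rewrite unitr0.
  - exact: nonunitD.
  - by move=> k k_neq0; rewrite unitrM negb_and e_nonunit ?orbT.
have pi2_dvd m : exists c, f m * e m = c * pi ^+ 2.
  have [->|fe_neq0] := eqVneq (f m * e m) 0; first by exists 0; rewrite mul0r.
  apply: dvr_val_dvd; rewrite ?expf_neq0 // dvr_valX // dvr_val_pi muln1.
  have : v (f m * e m) != 1%N by apply/eqP => val1; apply: no_val1; exists m, (f m).
  by have := dvr_val_gt0 fe_neq0 (f_nonunit m); lia.
have [c pi_c] : exists c, pi = c * pi ^+ 2.
  rewrite {1}def_pi; apply: (big_ind (fun z => exists c, z = c * pi ^+ 2)).
  - by exists 0; rewrite mul0r.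
  - by move=> x y [c1 ->] [c2 ->]; exists (c1 + c2); rewrite mulrDl.
  - by move=> m _; apply: pi2_dvd.
move/negP: uniformizer_nonunit; apply; apply/unitrPr; exists c.
by apply: (mulIf pi_neq0); rewrite mul1r {3}pi_c; ring.
Qed.

Section MinimalValuation.
Variable t : A.
Hypotheses (A0t : t \in A0) (t_neq0 : t != 0) (t_nonunit : t \isn't a GRing.unit).
Hypothesis t_min :
  forall x, x \in A0 -> x != 0 -> x \isn't a GRing.unit -> (v t <= v x)%N.
Local Notation E := (v t).

(* Divide x by t ^+ (v x %/ E) inside A0: the cofactor has valuation v x %% E < E,
   so it is a unit by minimality of E. *)
Lemma dvr_val_A0_dvd x : x \in A0 -> x != 0 -> (E %| v x)%N.
Proof.
move=> A0x x_neq0; set k := (v x %/ E)%N.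
have tk_neq0 : t ^+ k != 0 by rewrite expf_neq0.
have [y def_x] : exists y, x = y * t ^+ k.
  by apply: dvr_val_dvd => //; rewrite dvr_valX // leq_divM.
have tky : t ^+ k * y = x * e 0 by rewrite e0 mulr1 mulrC.
have [b A0b [def_y _]] := homogeneous_cofactor (rpredX k A0t) tk_neq0 A0x tky.
rewrite e0 mulr1 in def_y; rewrite {tky}def_y in def_x.
have b_neq0 : b != 0 by apply: contra_neq x_neq0 => b0; rewrite def_x b0 mul0r.
have vb : v b = (v x %% E)%N.
  have := divn_eq (v x) E; rewrite {1}def_x dvr_valM // dvr_valX // -/k; lia.
apply: contraT; rewrite /dvdn -vb dvr_val_eq0 // => /(t_min A0b b_neq0).
by rewrite leqNgt vb ltn_pmod // dvr_val_gt0.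
Qed.

Lemma dvr_val_e_lt m : (v (e m) < E)%N.
Proof.
rewrite ltnNge; apply: contra t_nonunit => /(dvr_val_dvd t_neq0 (e_neq0 m))[y def_em].
have ty : t * y = 1 * e m by rewrite mul1r def_em mulrC.
have [b _ [_ tb]] := homogeneous_cofactor A0t t_neq0 (rpred1 _) ty.
by apply/unitrPr; exists b.
Qed.

Lemma dvr_val_eD m n : v (e (m + n)) = ((v (e m) + v (e n)) %% E)%N.
Proof.
have [alpha A0alpha def_emn] := e_mul m n.
have alpha_neq0 : alpha != 0.
  by apply: contraTneq (mulf_neq0 (e_neq0 m) (e_neq0 n)) => a0; rewrite def_emn a0 mul0r eqxx.
rewrite -dvr_valM ?e_neq0 // def_emn dvr_valM ?e_neq0 //.
have /dvdnP[j ->] := dvr_val_A0_dvd A0alpha alpha_neq0.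
by rewrite modnMDl modn_small ?dvr_val_e_lt.
Qed.

Lemma dvr_val_e0 : v (e 0) = 0%N.
Proof. by apply/eqP; rewrite dvr_val_eq0 ?e_neq0 // e0 unitr1. Qed.

(* v (e (m - n)) + v (e n) = v (e m) mod E with all three below E forces
   v (e (m - n)) = 0, and only e 0 is a unit. *)
Lemma dvr_val_e_inj : injective (fun m => v (e m)).
Proof.
move=> m n /= vmn; apply/eqP; rewrite -subr_eq0; apply/eqP/e_unit_eq0.
rewrite -dvr_val_eq0 ?e_neq0 //.
have := dvr_val_eD (m - n) n; rewrite subrK vmn.
have := dvr_val_e_lt (m - n); have := dvr_val_e_lt n.
set a := v (e (m - n)); set b := v (e n) => b_lt a_lt.
have [le_E|lt_E] := leqP E (a + b).
  by rewrite -(subnK le_E) modnDr modn_small; lia.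
by rewrite modn_small //; lia.
Qed.

Lemma exists_dvr_val_e_eq1 : exists d, v (e d) = 1%N.
Proof.
have [m [a [A0a ae_neq0 vae]]] := uniformizer_component_val1.
have a_neq0 : a != 0 by apply: contraNneq ae_neq0 => ->; rewrite mul0r.
rewrite dvr_valM ?e_neq0 // in vae.
have [val1|vem_neq1] := eqVneq (v (e m)) 1%N; first by exists m.
have vem0 : v (e m) = 0%N by lia.
have a_nonunit : a \isn't a GRing.unit by rewrite -dvr_val_eq0 //; lia.
have E1 : E = 1%N.
  by have := t_min A0a a_neq0 a_nonunit; have := dvr_val_gt0 t_neq0 t_nonunit; lia.
have [n n_neq0] := exists_neq0; case/eqP: n_neq0; apply: dvr_val_e_inj.
by have := dvr_val_e_lt n; rewrite dvr_val_e0 E1; lia.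
Qed.

Section Generator.
Variable d : M.
Hypothesis ed_val1 : v (e d) = 1%N.

Lemma dvr_val_e_natmul k : (k < E)%N -> v (e (d *+ k)) = k.
Proof.
elim: k => [|k IHk] k_lt; first by rewrite mulr0n dvr_val_e0.
by rewrite mulrSr dvr_val_eD IHk ?ed_val1 ?addn1 ?modn_small // ltnW.
Qed.

Lemma natmul_dvr_val_e m : m = d *+ v (e m).
Proof. by apply: dvr_val_e_inj; rewrite /= dvr_val_e_natmul ?dvr_val_e_lt. Qed.

Lemma uniformizer_e : uniformizer (e d).
Proof.
have ed_nonunit : e d \isn't a GRing.unit by rewrite -dvr_val_eq0 ?e_neq0 ?ed_val1.
move=> y; split=> [y_nonunit|[a ->]]; last by rewrite unitrM negb_and ed_nonunit orbT.
have [->|y_neq0] := eqVneq y 0; first by exists 0; rewrite mul0r.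
by apply: dvr_val_dvd; rewrite ?e_neq0 ?ed_val1 ?dvr_val_gt0.
Qed.

(* e m and e d ^+ v (e m) are homogeneous of the same degree and valuation,
   so their ratio is a unit of degree 0. *)
Lemma e_A0_edX m : exists2 g, g \in A0 & e m = g * e d ^+ v (e m).
Proof.
have [beta A0beta def_edk] := eX_homogeneous d (v (e m)).
rewrite -natmul_dvr_val_e in def_edk.
have beta_neq0 : beta != 0.
  by apply: contraTneq (expf_neq0 (v (e m)) (e_neq0 d)) => b0; rewrite def_edk b0 mul0r eqxx.
have beta_unit : beta \is a GRing.unit.
  rewrite -dvr_val_eq0 //; apply/eqP.
  have := dvr_valM beta_neq0 (e_neq0 m); rewrite -def_edk dvr_valX ?e_neq0 // ed_val1; lia.
have beta_em : beta * beta^-1 = 1 * e 0 by rewrite e0 mulr1 divrr.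
have [g A0g [def_inv _]] := homogeneous_cofactor A0beta beta_neq0 (rpred1 _) beta_em.
exists g => //; rewrite e0 mulr1 in def_inv.
by rewrite def_edk mulrA -def_inv mulVr ?mul1r.
Qed.

Lemma generates_algebra_e : generates_algebra A0 (e d).
Proof.
have [g A0g def_e] := fin_all_exists2 e_A0_edX.
move=> a; have [f A0f ->] := e_decomp a.
have [s [A0s def_sum]] := sum_powers_regroup (e d)
  (fun m => rpredM (A0f m) (A0g m)) dvr_val_e_lt.
exists s; split=> //; rewrite -def_sum; apply: eq_bigr => m _.
by rewrite {1}def_e mulrA.
Qed.

End Generator.

Lemma exists_homogeneous_uniformizer : exists d : M,
  [/\ forall m, exists k, m = d *+ k, uniformizer (e d), generates_algebra A0 (e d)
    & forall m, m != 0 -> exists u, e m = u * e d].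
Proof.
have [d ed_val1] := exists_dvr_val_e_eq1.
exists d; split; first by move=> m; exists (v (e m)); apply: natmul_dvr_val_e.
- exact: uniformizer_e.
- exact: generates_algebra_e.
by move=> m /e_nonunit/(uniformizer_e ed_val1).
Qed.

End MinimalValuation.

Lemma graded_DVR_uniformizer : exists d : M,
  [/\ forall m, exists k, m = d *+ k, uniformizer (e d), generates_algebra A0 (e d)
    & forall m, m != 0 -> exists u, e m = u * e d].
Proof.
have [t [A0t t_neq0 t_nonunit t_min]] := exists_A0_min_val.
exact: (exists_homogeneous_uniformizer A0t t_neq0 t_nonunit t_min).
Qed.

End Grading.
End DVRValuation.

Section GroupAlgebra.
Variables (A : comUnitRingType) (M : finZmodType) (e : M -> A).
Local Notation nonzero := {m : M | m != 0}.

Lemma gmulCl (a : A) (h : galg A M) z : gmul (gC M a) h z = a * h z.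
Proof.
rewrite ffunE -{2}(subr0 z) -(sumr_pred1_mull 0 (fun m => a * h (z - m))).
by apply: eq_bigr => m _; rewrite ffunE mulrA.
Qed.

Lemma gmul0l (h : galg A M) : gmul 0 h = 0.
Proof. by apply/ffunP => z; rewrite !ffunE big1 // => m _; rewrite ffunE mul0r. Qed.

Lemma in_gideal0 (I : finType) (gens : I -> galg A M) : in_gideal gens 0.
Proof. by exists (fun=> 0); rewrite big1 // => i _; rewrite gmul0l. Qed.

Lemma augE (m z : M) : aug A m z = (z == m)%:R - (z == 0)%:R.
Proof. by rewrite !ffunE. Qed.

Lemma stab_relE (m z : M) : stab_rel e m z = e m * aug A m z.
Proof. exact: gmulCl. Qed.

Lemma phiE (c : nonzero -> A) z : phi c z = \sum_i c i * aug A (val i) z.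
Proof. by rewrite sum_ffunE; apply: eq_bigr => i _; rewrite gmulCl. Qed.

Lemma phi_val (c : nonzero -> A) i : phi c (val i) = c i.
Proof.
rewrite phiE (bigD1 i) //= augE eqxx (negPf (valP i)) subr0 mulr1 big1 ?addr0 //.
move=> j ji; rewrite augE (negPf (valP i)) subr0 (inj_eq val_inj) eq_sym.
by rewrite (negPf ji) mulr0.
Qed.

Lemma aug_ideal_sum0 f : in_gideal (@aug A M) f -> \sum_z f z = 0.
Proof.
case=> coef ->; under eq_bigr do rewrite sum_ffunE.
rewrite exchange_big big1 //= => m _; under eq_bigr do rewrite ffunE.
rewrite exchange_big big1 //= => j _; rewrite -mulr_sumr.
under eq_bigr do rewrite augE subr_eq subr_eq add0r.
by rewrite sumrB !sumr_pred1 subrr mulr0.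
Qed.

Lemma sum_nonzero (F : M -> A) :
  \sum_(i : nonzero) F (val i) = \sum_(m | m != 0) F m.
Proof.
rewrite (reindex_omap (val : nonzero -> M) insub) => [|m m_neq0]; last by rewrite insubT.
by apply: eq_bigl => -[m m_neq0] /=; rewrite insubT m_neq0 /= eqxx.
Qed.

Lemma phi_sum0 (f : galg A M) : \sum_z f z = 0 -> f = phi (fun i => f (val i)).
Proof.
move=> sum_f0; apply/ffunP => z; rewrite phiE (sum_nonzero (fun m => f m * aug A m z)).
under eq_bigr do rewrite augE mulrBr.
rewrite sumrB; have [->|z_neq0] := eqVneq z 0.
  rewrite big1 ?sub0r => [|m m_neq0]; last by rewrite eq_sym (negPf m_neq0) mulr0.
  under eq_bigr do rewrite mulr1.
  by move: sum_f0; rewrite (bigD1 0) //= => /eqP; rewrite addr_eq0 => /eqP.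
rewrite (bigD1 z) //= eqxx mulr1 big1 ?addr0 => [|m /andP[_ m_z]]; last first.
  by rewrite eq_sym (negPf m_z) mulr0.
by rewrite big1 ?subr0 // => m _; rewrite mulr0.
Qed.

Lemma aug_ideal_phi f : in_gideal (@aug A M) f ->
  exists c : nonzero -> A, in_gideal (stab_rel e) (f - phi c).
Proof.
move=> /aug_ideal_sum0/phi_sum0 def_f; exists (fun i => f (val i)).
by rewrite -def_f subrr; apply: in_gideal0.
Qed.

Lemma stab_ideal_dvd (x : A) f : (forall m, m != 0 -> exists u, e m = u * x) ->
  in_gideal (stab_rel e) f -> forall z, exists b, f z = x * b.
Proof.
move=> e_dvd [coef ->] z.
pose dvd_x y := exists b, y = x * b.
have dvd_x0 : dvd_x 0 by exists 0; rewrite mulr0.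
have dvd_xD y y' : dvd_x y -> dvd_x y' -> dvd_x (y + y').
  by move=> [b ->] [b' ->]; exists (b + b'); rewrite mulrDr.
rewrite sum_ffunE; apply: (big_ind dvd_x) => // m _; rewrite ffunE.
apply: (big_ind dvd_x) => // j _; rewrite stab_relE.
have [->|/e_dvd[u ->]] := eqVneq m 0; first by rewrite augE subrr !mulr0.
by rewrite /dvd_x; exists (coef m j * u * aug A m (z - j)); ring.
Qed.

(* Coefficientwise form of X^(k d) - 1 = (1 + X^d + ... + X^((k-1) d)) (X^d - 1). *)
Lemma aug_natmul (d : M) k z :
  aug A (d *+ k) z = \sum_w (\sum_(j < k) (w == d *+ j)%:R) * aug A d (z - w).
Proof.
under eq_bigr do rewrite mulr_suml.
rewrite exchange_big /=.
under eq_bigr do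
  rewrite (sumr_pred1_mull _ (fun w => aug A d (z - w))) augE subr_eq subr_eq0 -mulrS.
rewrite -(big_mkord xpredT (fun j => (z == d *+ j.+1)%:R - (z == d *+ j)%:R)).
by rewrite telescope_sumr // augE.
Qed.

Lemma phi_stab_ideal (d : M) (c : nonzero -> A) :
  (forall m, exists k, m = d *+ k) -> (forall i, exists b, c i = e d * b) ->
  in_gideal (stab_rel e) (phi c).
Proof.
move=> /fin_all_exists[K def_m] /fin_all_exists[b def_c].
pose F : galg A M := [ffun w => \sum_i b i * \sum_(j < K (val i)) (w == d *+ j)%:R].
exists (fun m => if m == d then F else 0).
apply/ffunP => z; rewrite phiE sum_ffunE [in RHS](bigD1 d) //= eqxx.
rewrite [in RHS]big1 ?addr0; last by move=> m /negPf->; rewrite gmul0l ffunE.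
rewrite ffunE; under [RHS]eq_bigr do rewrite ffunE mulr_suml.
rewrite exchange_big; apply: eq_bigr => i _.
rewrite def_c {1}(def_m (val i)) aug_natmul mulr_sumr; apply: eq_bigr => w _.
by rewrite stab_relE; ring.
Qed.

Lemma stab_ideal_phiP (d : M) (c : nonzero -> A) :
  (forall m, exists k, m = d *+ k) -> (forall m, m != 0 -> exists u, e m = u * e d) ->
  in_gideal (stab_rel e) (phi c) <-> forall i, exists b, c i = e d * b.
Proof.
move=> d_gen e_dvd; split; last exact: phi_stab_ideal.
by move=> /(stab_ideal_dvd e_dvd) c_dvd i; rewrite -phi_val.
Qed.

End GroupAlgebra.

Theorem mainTheorem9
  (p : nat) (A : idomainType) (M : finZmodType) (A0 : pred A) (e : M -> A)
  (charA : p \in [pchar A]) (pM : p.-nat #|M|) (M_nontriv : (1 < #|M|)%N)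
  (dvrA : is_DVR A) (grA : MGrading A0 e)
  (totram : forall n : M, e n \is a GRing.unit -> n = 0) :
  exists d : M,
    [/\ (forall m : M, exists k : nat, m = d *+ k),
        uniformizer (e d),
        generates_algebra A0 (e d),
        (forall f : galg A M, in_gideal (@aug A M) f ->
           exists c : {m : M | m != 0} -> A, in_gideal (stab_rel e) (f - phi c))
      & (forall c : {m : M | m != 0} -> A,
           in_gideal (stab_rel e) (phi c) <->
           forall i, exists b : A, c i = e d * b)].
Proof.
case: grA => A0_subring [e0 e_mul e_decomp e_decomp_uniq].
have [pi [pi_unif pi_neq0]] := DVR_uniformizer dvrA.
have A_pid : forall I : pred A, is_ideal I -> is_principal I by case: dvrA.
have [d [d_gen ed_unif ed_gen e_dvd]] := graded_DVR_uniformizer pi_unif A_pid pi_neq0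
  A0_subring e0 e_mul e_decomp e_decomp_uniq totram M_nontriv.
exists d; split=> // [f|c]; first exact: aug_ideal_phi.
exact: stab_ideal_phiP.
Qed.
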